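(* Let $\Gamma\subset\mathbb{R}^2$ be a lattice, let $\Lambda>0$ be a smooth $\Gamma$-periodic function on $\mathbb{R}^2$, let $n\ge3$, and let $F=\sum_{i=0}^n a_i(x,y)p_1^{n-i}p_2^i$ with smooth $\Gamma$-periodic $a_i$ satisfy $\{H,F\}=0$, $H=\frac{p_1^2+p_2^2}{2\Lambda}$. Assume the Kolokoltsov relations hold with constant $c_1=0$ and some constant $c_2$, i.e. $$a_{n-1}=\sum_{j\ge 0,\ 2j\le n-3}(-1)^j a_{n-3-2j},\qquad a_n=c_2+\sum_{j\ge 0,\ 2j\le n-2}(-1)^j a_{n-2-2j}.$$ Define $P,Q,R$ as follows. If $n=2k$: with $S_e=\sum_{j=0}^{k-1}(-1)^j(n-2j)a_{2j}$, $S_o=\sum_{j=0}^{k-2}(-1)^j(n-2-2j)a_{2j+1}$, put $P=S_e\Lambda$, $Q=-S_o\Lambda$, $R=(-S_e+(-1)^k nc_2)\Lambda$. If $n=2k+1$: with $T_e=\sum_{j=0}^{k-1}(-1)^j(n-1-2j)a_{2j}$, $T_o=\sum_{j=0}^{k-1}(-1)^j(n-1-2j)a_{2j+1}$, put $P=T_o\Lambda$, $Q=T_e\Lambda$, $R=(-T_o+(-1)^k nc_2)\Lambda$. Then $$P_x+Q_y=0,\qquad Q_x+R_y=0.$$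
   Context: The Poisson bracket is $\{H,F\}=\sum_{j=1}^2\left(\frac{\partial H}{\partial q^j}\frac{\partial F}{\partial p_j}-\frac{\partial H}{\partial p_j}\frac{\partial F}{\partial q^j}\right)$ with $(q^1,q^2)=(x,y)$; $\{H,F\}=0$ means $F$ is a first integral of the geodesic flow of the metric $\Lambda(dx^2+dy^2)$ on the torus $\mathbb{R}^2/\Gamma$. By a theorem of Kolokoltsov, for any such integral there are constants $c_1,c_2$ with $a_{n-1}=c_1+\sum_{j\ge0,2j\le n-3}(-1)^ja_{n-3-2j}$ and $a_n=c_2+\sum_{j\ge0,2j\le n-2}(-1)^ja_{n-2-2j}$; $c_1=0$ can be arranged by a rotation of the $(x,y)$-plane. *)

From Stdlib Require Import Reals Lra Lia List.
Open Scope R_scope.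

Definition cont2 (f : R -> R -> R) : Prop :=
  forall x y eps, 0 < eps -> exists d, 0 < d /\
    forall u v, Rabs (u - x) < d -> Rabs (v - y) < d -> Rabs (f u v - f x y) < eps.

(* C^infinity on R^2: all iterated partial derivatives (any order of
   differentiation, false = d/dx, true = d/dy) exist and are continuous. *)
Definition smooth2 (f : R -> R -> R) : Prop :=
  exists D : list bool -> R -> R -> R, D nil = f /\
    forall l, cont2 (D l) /\
      (forall x y, derivable_pt_lim (fun t => D l t y) x (D (false :: l) x y)) /\
      (forall x y, derivable_pt_lim (fun t => D l x t) y (D (true :: l) x y)).

(* Gamma = Z e1 + Z e2 with e1, e2 linearly independent *)
Definition is_lattice_basis (e1x e1y e2x e2y : R) : Prop :=
  e1x * e2y - e1y * e2x <> 0.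

(* Gamma-periodicity (invariance under the generators, hence under Gamma) *)
Definition periodic (e1x e1y e2x e2y : R) (f : R -> R -> R) : Prop :=
  forall x y, f (x + e1x) (y + e1y) = f x y /\ f (x + e2x) (y + e2y) = f x y.

Definition poisson_zero (H F : R -> R -> R -> R -> R) : Prop :=
  forall x y p1 p2, exists Hx Hy Hp1 Hp2 Fx Fy Fp1 Fp2,
    derivable_pt_lim (fun t => H t y p1 p2) x Hx /\
    derivable_pt_lim (fun t => H x t p1 p2) y Hy /\
    derivable_pt_lim (fun t => H x y t p2) p1 Hp1 /\
    derivable_pt_lim (fun t => H x y p1 t) p2 Hp2 /\
    derivable_pt_lim (fun t => F t y p1 p2) x Fx /\
    derivable_pt_lim (fun t => F x t p1 p2) y Fy /\
    derivable_pt_lim (fun t => F x y t p2) p1 Fp1 /\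
    derivable_pt_lim (fun t => F x y p1 t) p2 Fp2 /\
    Hx * Fp1 - Hp1 * Fx + Hy * Fp2 - Hp2 * Fy = 0.

Definition hamiltonian (Lam : R -> R -> R) : R -> R -> R -> R -> R :=
  fun x y p1 p2 => (p1 ^ 2 + p2 ^ 2) / (2 * Lam x y).

Definition polyF (n : nat) (a : nat -> R -> R -> R) : R -> R -> R -> R -> R :=
  fun x y p1 p2 => sum_f_R0 (fun i => a i x y * p1 ^ (n - i) * p2 ^ i) n.

Definition kolokoltsov (n : nat) (a : nat -> R -> R -> R) (c2 : R) : Prop :=
  forall x y,
    a (n - 1)%nat x y =
      sum_f_R0 (fun j => (-1) ^ j * a (n - 3 - 2 * j)%nat x y) (Nat.div2 (n - 3)) /\
    a n x y =
      c2 + sum_f_R0 (fun j => (-1) ^ j * a (n - 2 - 2 * j)%nat x y) (Nat.div2 (n - 2)).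

Definition Se (n k : nat) (a : nat -> R -> R -> R) (x y : R) : R :=
  sum_f_R0 (fun j => (-1) ^ j * (INR n - 2 * INR j) * a (2 * j)%nat x y) (k - 1).
Definition So (n k : nat) (a : nat -> R -> R -> R) (x y : R) : R :=
  sum_f_R0 (fun j => (-1) ^ j * (INR n - 2 - 2 * INR j) * a (2 * j + 1)%nat x y) (k - 2).
Definition Te (n k : nat) (a : nat -> R -> R -> R) (x y : R) : R :=
  sum_f_R0 (fun j => (-1) ^ j * (INR n - 1 - 2 * INR j) * a (2 * j)%nat x y) (k - 1).
Definition To (n k : nat) (a : nat -> R -> R -> R) (x y : R) : R :=
  sum_f_R0 (fun j => (-1) ^ j * (INR n - 1 - 2 * INR j) * a (2 * j + 1)%nat x y) (k - 1).

Definition div_free (P Q R0 : R -> R -> R) : Prop :=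
  forall x y,
    (exists Px Qy, derivable_pt_lim (fun t => P t y) x Px /\
                   derivable_pt_lim (fun t => Q x t) y Qy /\ Px + Qy = 0) /\
    (exists Qx Ry, derivable_pt_lim (fun t => Q t y) x Qx /\
                   derivable_pt_lim (fun t => R0 x t) y Ry /\ Qx + Ry = 0).

(* Fix a point (x,y) and let c_i = a_i(x,y) (extended by 0 for i > n).
   Multiplying {H,F}(x,y,1,t) by -Lambda^2 gives a polynomial in t whose
   coefficients [bracket_coef] must all vanish (identity principle).  Two
   alternating weighted sums of these coefficients telescope, and express the
   real and imaginary parts of a complex conservation law for
     W = W0 + i W1 = dF/dp1 (1,i)   and   S = S0 + i S1 = F(1,i):
       d_x(Lambda W0) - d_y(Lambda W1) = - Lambda d_x S0 - n Lambda_y S1,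
       d_x(Lambda W1) + d_y(Lambda W0) = - Lambda d_x S1 + n Lambda_y S0
   ([moment_identities]).  The Kolokoltsov relations say exactly that
   F(1,i) = c2 i^n, so S is constant and the law becomes two divergence-free
   conditions ([moment_conservation_law]).  The sums Se, So, Te, To of the
   statement are W0, W1 up to re-indexing and the constant S, which gives the
   theorem for n even and n odd. *)

From Stdlib Require Import Reals Lra Lia.
Open Scope R_scope.

Lemma sum_extend (f g : nat -> R) (M N : nat) : (M <= N)%nat ->
  (forall j, (j <= M)%nat -> f j = g j) ->
  (forall j, (M < j <= N)%nat -> g j = 0) ->
  sum_f_R0 f M = sum_f_R0 g N.
Proof.
  intros HMN Hfg Hg. induction N as [|N IHN].
  - replace M with 0%nat by lia. apply Hfg; lia.
  - destruct (Nat.eq_dec M (S N)) as [->|HM].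
    + apply sum_eq; auto.
    + rewrite tech5, <- IHN by (try intros; try apply Hg; lia).
      rewrite (Hg (S N)) by lia. ring.
Qed.

Lemma sum_scal_l (f : nat -> R) (c : R) (N : nat) :
  sum_f_R0 (fun j => c * f j) N = c * sum_f_R0 f N.
Proof. induction N as [|N IHN]; simpl; [|rewrite IHN]; ring. Qed.

Lemma pow_m1_sqr (M : nat) : (-1) ^ M * (-1) ^ M = 1.
Proof. rewrite <- Rpow_mult_distr. replace (-1 * -1) with 1 by ring. apply pow1. Qed.

Lemma alt_sum_rev (f : nat -> R) (M : nat) :
  sum_f_R0 (fun j => (-1) ^ j * f (M - j)%nat) M
  = (-1) ^ M * sum_f_R0 (fun j => (-1) ^ j * f j) M.
Proof.
  induction M as [|M IHM]; [simpl; ring|].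
  rewrite decomp_sum by lia. simpl pred.
  rewrite (sum_eq _ (fun j => -1 * ((-1) ^ j * f (M - j)%nat))) by (intros; simpl; ring).
  rewrite sum_scal_l, IHM, tech5, Nat.sub_0_r.
  simpl pow. set (s := (-1) ^ M). set (U := sum_f_R0 _ M).
  replace (-1 * s * (U + -1 * s * f (S M))) with (- s * U + (s * s) * f (S M)) by ring.
  assert (Hs : s * s = 1) by apply pow_m1_sqr. rewrite Hs. ring.
Qed.

(* The closure step behind the Kolokoltsov relations: if the next value of f is
   c plus the reversed alternating sum, the full alternating sum is
   (-1)^(M+1) c. *)
Lemma alt_sum_closure (f : nat -> R) (M : nat) (c : R) :
  f (S M) = c + sum_f_R0 (fun j => (-1) ^ j * f (M - j)%nat) M ->
  sum_f_R0 (fun j => (-1) ^ j * f j) (S M) = (-1) ^ S M * c.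
Proof.
  intros Hf. rewrite tech5, Hf, alt_sum_rev.
  simpl pow. set (s := (-1) ^ M). set (U := sum_f_R0 _ M).
  replace (U + -1 * s * (c + s * U)) with (- s * c + U * (1 - s * s)) by ring.
  assert (Hs : s * s = 1) by apply pow_m1_sqr. rewrite Hs. ring.
Qed.

Lemma derivable_pt_lim_value (f : R -> R) (x l l' : R) :
  derivable_pt_lim f x l -> l = l' -> derivable_pt_lim f x l'.
Proof. intros H ->; exact H. Qed.

Lemma deriv_of_const (f : R -> R) (c x l : R) :
  (forall t, f t = c) -> derivable_pt_lim f x l -> l = 0.
Proof.
  intros Hf Hd. apply (uniqueness_limite f x); [exact Hd|].
  apply (derivable_pt_lim_ext (fun _ => c)); [intros; symmetry; auto|].
  apply derivable_pt_lim_const.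
Qed.

(* Product rule, constant factors and finite sums, stated for lambda-terms
   rather than for the pointwise operations on functions. *)
Lemma derivable_pt_lim_prod (f g : R -> R) (x l m : R) :
  derivable_pt_lim f x l -> derivable_pt_lim g x m ->
  derivable_pt_lim (fun t => f t * g t) x (l * g x + f x * m).
Proof. apply derivable_pt_lim_mult. Qed.

Lemma derivable_pt_lim_cmul (f : R -> R) (c x l : R) :
  derivable_pt_lim f x l -> derivable_pt_lim (fun t => c * f t) x (c * l).
Proof. apply derivable_pt_lim_scal. Qed.

Lemma derivable_pt_lim_sum (f : nat -> R -> R) (g : nat -> R) (N : nat) (x : R) :
  (forall i, (i <= N)%nat -> derivable_pt_lim (f i) x (g i)) ->
  derivable_pt_lim (fun t => sum_f_R0 (fun i => f i t) N) x (sum_f_R0 g N).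
Proof.
  induction N as [|N IHN]; intros H; simpl; [apply H; lia|].
  apply (derivable_pt_lim_plus (fun t => sum_f_R0 (fun i => f i t) N) (f (S N))).
  - apply IHN; intros; apply H; lia.
  - apply H; lia.
Qed.

Definition poly_eval (c : nat -> R) (N : nat) (t : R) : R :=
  sum_f_R0 (fun m => c m * t ^ m) N.

Lemma poly_eval_S (c : nat -> R) (N : nat) (t : R) :
  poly_eval c (S N) t = c O + t * poly_eval (fun m => c (S m)) N t.
Proof.
  unfold poly_eval. induction N as [|N IHN]; [simpl; ring|].
  rewrite tech5, IHN, tech5. simpl. ring.
Qed.

Lemma poly_eval_plus (f g : nat -> R) (N : nat) (t : R) :
  poly_eval (fun m => f m + g m) N t = poly_eval f N t + poly_eval g N t.
Proof. unfold poly_eval. induction N as [|N IHN]; simpl; [|rewrite IHN]; ring. Qed.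

Lemma poly_eval_scal (f : nat -> R) (a : R) (N : nat) (t : R) :
  poly_eval (fun m => a * f m) N t = a * poly_eval f N t.
Proof. unfold poly_eval. induction N as [|N IHN]; simpl; [|rewrite IHN]; ring. Qed.

Lemma poly_eval_tail (c : nat -> R) (N M : nat) (t : R) : (N <= M)%nat ->
  (forall m, (N < m)%nat -> c m = 0) -> poly_eval c M t = poly_eval c N t.
Proof.
  intros HNM Hc. symmetry. apply sum_extend; auto.
  intros m Hm. rewrite Hc by lia. ring.
Qed.

Fixpoint shift (d : nat) (c : nat -> R) (m : nat) : R :=
  match d, m with
  | O, _ => c m
  | S _, O => 0
  | S d', S m' => shift d' c m'
  end.

Lemma poly_eval_shift (d : nat) (c : nat -> R) (N : nat) (t : R) :
  poly_eval (shift d c) (d + N) t = t ^ d * poly_eval c N t.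
Proof.
  induction d as [|d IHd].
  - change (poly_eval c N t = 1 * poly_eval c N t). ring.
  - rewrite Nat.add_succ_l, poly_eval_S.
    change (0 + t * poly_eval (shift d c) (d + N) t = t ^ S d * poly_eval c N t).
    rewrite IHd. simpl. ring.
Qed.

Definition poly_deriv (c : nat -> R) (m : nat) : R := INR (S m) * c (S m).

Lemma poly_eval_deriv (c : nat -> R) (N : nat) (t : R) :
  derivable_pt_lim (poly_eval c (S N)) t (poly_eval (poly_deriv c) N t).
Proof.
  unfold poly_eval. eapply derivable_pt_lim_value.
  - apply (derivable_pt_lim_sum (fun m s => c m * s ^ m)).
    intros m _. apply derivable_pt_lim_cmul, derivable_pt_lim_pow.
  - unfold poly_deriv. induction N as [|N IHN]; [simpl; ring|].
    rewrite tech5, IHN, tech5. simpl pred. ring.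
Qed.

Lemma poly_eval_continuous (c : nat -> R) (N : nat) (t : R) :
  continuity_pt (poly_eval c N) t.
Proof.
  apply derivable_continuous_pt.
  exists (sum_f_R0 (fun m => c m * (INR m * t ^ pred m)) N).
  apply (derivable_pt_lim_sum (fun m s => c m * s ^ m)).
  intros m _. apply derivable_pt_lim_cmul, derivable_pt_lim_pow.
Qed.

Lemma continuous_vanishing_at_0 (f : R -> R) :
  continuity_pt f 0 -> (forall t, t <> 0 -> f t = 0) -> f 0 = 0.
Proof.
  intros Hc Hz. destruct (Req_dec (f 0) 0) as [|Hne]; auto. exfalso.
  destruct (Hc (Rabs (f 0)) (Rabs_pos_lt _ Hne)) as [d [Hd Hclose]].
  specialize (Hclose (d / 2)). simpl in Hclose. unfold R_dist in Hclose.
  rewrite Hz, Rminus_0_l, Rabs_Ropp in Hclose by lra.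
  apply (Rlt_irrefl (Rabs (f 0))), Hclose. split.
  - split; [exact I | lra].
  - rewrite Rminus_0_r, Rabs_right; lra.
Qed.

Lemma poly_eval_coef_zero (N : nat) : forall c : nat -> R,
  (forall t, poly_eval c N t = 0) -> forall m, (m <= N)%nat -> c m = 0.
Proof.
  induction N as [|N IHN]; intros c Hc m Hm.
  - replace m with 0%nat by lia. rewrite <- (Hc 0). unfold poly_eval; simpl; ring.
  - assert (Hc0 : c O = 0) by (rewrite <- (Hc 0), poly_eval_S; ring).
    destruct m as [|m]; [exact Hc0|].
    apply (IHN (fun m => c (S m))); [|lia].
    assert (Hoff : forall t, t <> 0 -> poly_eval (fun m => c (S m)) N t = 0).
    { intros t Ht. apply (Rmult_eq_reg_l t); [|exact Ht].
      rewrite Rmult_0_r, <- (Hc t), poly_eval_S, Hc0. ring. }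
    intros t. destruct (Req_dec t 0) as [->|Ht]; auto.
    apply continuous_vanishing_at_0; [apply poly_eval_continuous | exact Hoff].
Qed.

Definition has_partials (f : R -> R -> R) : Prop :=
  forall x y, (exists l, derivable_pt_lim (fun t => f t y) x l) /\
              (exists l, derivable_pt_lim (fun t => f x t) y l).

Lemma smooth2_has_partials (f : R -> R -> R) : smooth2 f -> has_partials f.
Proof.
  intros [D [HD0 HD]] x y. destruct (HD nil) as [_ [Hx Hy]].
  rewrite HD0 in Hx, Hy. split; eauto.
Qed.

Lemma finite_choice (P : nat -> R -> Prop) (N : nat) :
  (forall i, (i <= N)%nat -> exists v, P i v) ->
  (forall i, (N < i)%nat -> P i 0) ->
  exists f : nat -> R, forall i, P i (f i).
Proof.
  intros Hle Hgt.
  assert (Hfin : forall M, (M <= N)%nat ->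
            exists f : nat -> R, forall i, (i <= M)%nat -> P i (f i)).
  { induction M as [|M IHM]; intros HM.
    - destruct (Hle 0%nat) as [v Hv]; [lia|].
      exists (fun _ => v). intros i Hi. replace i with 0%nat by lia. exact Hv.
    - destruct IHM as [f Hf]; [lia|]. destruct (Hle (S M)) as [v Hv]; [lia|].
      exists (fun i => if Nat.eqb i (S M) then v else f i). intros i Hi.
      destruct (Nat.eqb_spec i (S M)) as [->|Hne]; [exact Hv | apply Hf; lia]. }
  destruct (Hfin N) as [f Hf]; [lia|].
  exists (fun i => if Nat.leb i N then f i else 0). intros i.
  destruct (Nat.leb_spec i N); [apply Hf; lia | apply Hgt; lia].
Qed.

Definition coef (n : nat) (a : nat -> R -> R -> R) (x y : R) (i : nat) : R :=
  if Nat.leb i n then a i x y else 0.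

Lemma coef_le (n : nat) (a : nat -> R -> R -> R) (x y : R) (i : nat) :
  (i <= n)%nat -> coef n a x y i = a i x y.
Proof. intros Hi. unfold coef. destruct (Nat.leb_spec i n); [reflexivity | lia]. Qed.

Lemma coef_gt (n : nat) (a : nat -> R -> R -> R) (x y : R) (i : nat) :
  (n < i)%nat -> coef n a x y i = 0.
Proof. intros Hi. unfold coef. destruct (Nat.leb_spec i n); [lia | reflexivity]. Qed.

Lemma coef_partials (n : nat) (a : nat -> R -> R -> R) :
  (forall i, (i <= n)%nat -> has_partials (a i)) -> forall x y,
  exists Ax Ay : nat -> R,
    (forall i, derivable_pt_lim (fun t => coef n a t y i) x (Ax i)) /\
    (forall i, derivable_pt_lim (fun t => coef n a x t i) y (Ay i)).
Proof.
  intros Ha x y.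
  destruct (finite_choice (fun i l => derivable_pt_lim (fun t => coef n a t y i) x l) n)
    as [Ax HAx].
  { intros i Hi. destruct (proj1 (Ha i Hi x y)) as [l Hl]. exists l.
    apply (derivable_pt_lim_ext (fun t => a i t y)); [|exact Hl].
    intros; symmetry; apply coef_le; exact Hi. }
  { intros i Hi. apply (derivable_pt_lim_ext (fun _ => 0)); [|apply derivable_pt_lim_const].
    intros; symmetry; apply coef_gt; exact Hi. }
  destruct (finite_choice (fun i l => derivable_pt_lim (fun t => coef n a x t i) y l) n)
    as [Ay HAy].
  { intros i Hi. destruct (proj2 (Ha i Hi x y)) as [l Hl]. exists l.
    apply (derivable_pt_lim_ext (fun t => a i x t)); [|exact Hl].
    intros; symmetry; apply coef_le; exact Hi. }
  { intros i Hi. apply (derivable_pt_lim_ext (fun _ => 0)); [|apply derivable_pt_lim_const].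
    intros; symmetry; apply coef_gt; exact Hi. }
  exists Ax, Ay. split; assumption.
Qed.

Definition alt_sum (w : nat -> R) (s : nat -> nat) (N : nat) (c : nat -> R) : R :=
  sum_f_R0 (fun l => (-1) ^ l * w l * c (s l)) N.

Lemma alt_sum_lin (w w1 w2 : nat -> R) (al be : R) (s : nat -> nat) (N : nat) (c : nat -> R) :
  (forall l, w l = al * w1 l + be * w2 l) ->
  alt_sum w s N c = al * alt_sum w1 s N c + be * alt_sum w2 s N c.
Proof.
  intros Hw. unfold alt_sum.
  induction N as [|N IHN]; simpl; [|rewrite IHN]; rewrite Hw; ring.
Qed.

Lemma alt_sum_zero (w : nat -> R) (s : nat -> nat) (N : nat) (c : nat -> R) :
  (forall i, c i = 0) -> alt_sum w s N c = 0.
Proof.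
  intros Hc. unfold alt_sum.
  induction N as [|N IHN]; simpl; [|rewrite IHN]; rewrite Hc; ring.
Qed.

Lemma alt_sum_deriv (w : nat -> R) (s : nat -> nat) (N : nat)
  (C : R -> nat -> R) (C' : nat -> R) (x : R) :
  (forall i, derivable_pt_lim (fun t => C t i) x (C' i)) ->
  derivable_pt_lim (fun t => alt_sum w s N (C t)) x (alt_sum w s N C').
Proof.
  intros H. unfold alt_sum.
  apply (derivable_pt_lim_sum (fun l t => (-1) ^ l * w l * C t (s l))).
  intros l _. apply derivable_pt_lim_cmul, H.
Qed.

(* The four moments of a coefficient sequence c of degree n.  For
   F = sum c_i p1^(n-i) p2^i one has F(1,i) = even_part + i odd_part and
   dF/dp1 (1,i) = even_moment + i odd_moment. *)
Definition even_part (n : nat) (c : nat -> R) : R :=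
  alt_sum (fun _ => 1) (fun l => 2 * l)%nat n c.
Definition odd_part (n : nat) (c : nat -> R) : R :=
  alt_sum (fun _ => 1) (fun l => S (2 * l)) n c.
Definition even_moment (n : nat) (c : nat -> R) : R :=
  alt_sum (fun l => INR n - 2 * INR l) (fun l => 2 * l)%nat n c.
Definition odd_moment (n : nat) (c : nat -> R) : R :=
  alt_sum (fun l => INR n - 1 - 2 * INR l) (fun l => S (2 * l)) n c.

(* Coefficients of dF/dp1 (1,t); those of dF/dp2 (1,t) are [poly_deriv c]. *)
Definition dp1_coef (n : nat) (c : nat -> R) (m : nat) : R := (INR n - INR m) * c m.

(* Coefficients of the polynomial  t |-> -Lambda^2 {H,F}(x,y,1,t), where
   L, Lx, Ly are Lambda and its partials at (x,y), and c, cx, cy the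
   coefficients of F and their partials. *)
Definition bracket_coef (n : nat) (L Lx Ly : R) (c cx cy : nat -> R) (m : nat) : R :=
  L * cx m + L * shift 1 cy m
  + / 2 * Lx * (dp1_coef n c m + shift 2 (dp1_coef n c) m)
  + / 2 * Ly * (poly_deriv c m + shift 2 (poly_deriv c) m).

(* Telescoping the even-indexed bracket coefficients against the weights
   (-1)^l (n+1-2l): everything cancels except moments and a boundary term. *)
Lemma bracket_coef_even_sum (n : nat) (L Lx Ly : R) (c cx cy : nat -> R) (N : nat) :
  alt_sum (fun l => INR n + 1 - 2 * INR l) (fun l => 2 * l)%nat N
          (bracket_coef n L Lx Ly c cx cy) =
  L * alt_sum (fun l => INR n + 1 - 2 * INR l) (fun l => 2 * l)%nat N cx
  + Lx * alt_sum (fun l => INR n - 2 * INR l) (fun l => 2 * l)%nat N c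
  - L * alt_sum (fun l => INR n - 1 - 2 * INR l) (fun l => S (2 * l)) N cy
  + Ly * alt_sum (fun l => 2 * INR l + 1) (fun l => S (2 * l)) N c
  + (-1) ^ N * ((INR n - 1 - 2 * INR N) * L * cy (S (2 * N))
      + / 2 * (INR n - 2 * INR N) * (INR n - 1 - 2 * INR N) * Lx * c (2 * N)%nat
      + / 2 * (2 * INR N + 1) * (INR n - 1 - 2 * INR N) * Ly * c (S (2 * N))).
Proof.
  unfold alt_sum. induction N as [|N IHN].
  - unfold bracket_coef, dp1_coef, poly_deriv. simpl. field.
  - rewrite !tech5, IHN. replace (2 * S N)%nat with (S (S (2 * N))) by lia.
    unfold bracket_coef, dp1_coef, poly_deriv. cbn [shift].
    rewrite !S_INR, !mult_INR. simpl pow. simpl INR. field.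
Qed.

Lemma bracket_coef_odd_sum (n : nat) (L Lx Ly : R) (c cx cy : nat -> R) (N : nat) :
  alt_sum (fun l => INR n - 2 * INR l) (fun l => S (2 * l)) N
          (bracket_coef n L Lx Ly c cx cy) =
  L * alt_sum (fun l => INR n - 2 * INR l) (fun l => S (2 * l)) N cx
  + Lx * alt_sum (fun l => INR n - 1 - 2 * INR l) (fun l => S (2 * l)) N c
  + L * alt_sum (fun l => INR n - 2 * INR l) (fun l => 2 * l)%nat N cy
  - Ly * alt_sum (fun l => 2 * INR l) (fun l => 2 * l)%nat N c
  + (-1) ^ N * (/ 2 * (INR n - 1 - 2 * INR N) * (INR n - 2 - 2 * INR N) * Lx * c (S (2 * N))
      + (INR n - 2 * INR N) * (INR N + 1) * Ly * c (S (S (2 * N)))).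
Proof.
  unfold alt_sum. induction N as [|N IHN].
  - unfold bracket_coef, dp1_coef, poly_deriv. simpl. field.
  - rewrite !tech5, IHN. replace (2 * S N)%nat with (S (S (2 * N))) by lia.
    unfold bracket_coef, dp1_coef, poly_deriv. cbn [shift].
    rewrite !S_INR, !mult_INR. simpl pow. simpl INR. field.
Qed.

(* If all bracket coefficients vanish, the moments satisfy the real and
   imaginary parts of the complex conservation law (see the header). *)
Lemma moment_identities (n : nat) (L Lx Ly : R) (c cx cy : nat -> R) :
  (1 <= n)%nat -> (forall i, (n < i)%nat -> c i = 0) ->
  (forall i, (n < i)%nat -> cy i = 0) ->
  (forall m, bracket_coef n L Lx Ly c cx cy m = 0) ->
  L * even_moment n cx + Lx * even_moment n c - (L * odd_moment n cy + Ly * odd_moment n c)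
    + L * even_part n cx + INR n * Ly * odd_part n c = 0 /\
  L * odd_moment n cx + Lx * odd_moment n c + (L * even_moment n cy + Ly * even_moment n c)
    + L * odd_part n cx - INR n * Ly * even_part n c = 0.
Proof.
  intros Hn Hc Hcy HE. unfold even_moment, odd_moment, even_part, odd_part. split.
  - pose proof (bracket_coef_even_sum n L Lx Ly c cx cy n) as H.
    rewrite alt_sum_zero in H by exact HE.
    rewrite (Hc (2 * n)%nat), (Hc (S (2 * n))), (Hcy (S (2 * n))) in H by lia.
    rewrite (alt_sum_lin _ (fun l => INR n - 2 * INR l) (fun _ => 1) 1 1) in H
      by (intros; ring).
    rewrite (alt_sum_lin (fun l => 2 * INR l + 1) (fun l => INR n - 1 - 2 * INR l)
      (fun _ => 1) (-1) (INR n)) in H by (intros; ring).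
    lra.
  - pose proof (bracket_coef_odd_sum n L Lx Ly c cx cy n) as H.
    rewrite alt_sum_zero in H by exact HE.
    rewrite (Hc (S (2 * n))), (Hc (S (S (2 * n)))) in H by lia.
    rewrite (alt_sum_lin (fun l => INR n - 2 * INR l) (fun l => INR n - 1 - 2 * INR l)
      (fun _ => 1) 1 1 (fun l => S (2 * l))) in H by (intros; ring).
    rewrite (alt_sum_lin (fun l => 2 * INR l) (fun l => INR n - 2 * INR l)
      (fun _ => 1) (-1) (INR n)) in H by (intros; ring).
    lra.
Qed.

Lemma poisson_zero_at (H F : R -> R -> R -> R -> R)
  (x y p1 p2 hx hy hp1 hp2 fx fy fp1 fp2 : R) :
  poisson_zero H F ->
  derivable_pt_lim (fun t => H t y p1 p2) x hx ->
  derivable_pt_lim (fun t => H x t p1 p2) y hy ->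
  derivable_pt_lim (fun t => H x y t p2) p1 hp1 ->
  derivable_pt_lim (fun t => H x y p1 t) p2 hp2 ->
  derivable_pt_lim (fun t => F t y p1 p2) x fx ->
  derivable_pt_lim (fun t => F x t p1 p2) y fy ->
  derivable_pt_lim (fun t => F x y t p2) p1 fp1 ->
  derivable_pt_lim (fun t => F x y p1 t) p2 fp2 ->
  hx * fp1 - hp1 * fx + hy * fp2 - hp2 * fy = 0.
Proof.
  intros hPB d1 d2 d3 d4 d5 d6 d7 d8.
  destruct (hPB x y p1 p2) as (Hx & Hy & Hp1 & Hp2 & Fx & Fy & Fp1 & Fp2 &
    e1 & e2 & e3 & e4 & e5 & e6 & e7 & e8 & Heq).
  rewrite (uniqueness_limite _ _ _ _ d1 e1), (uniqueness_limite _ _ _ _ d2 e2),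
    (uniqueness_limite _ _ _ _ d3 e3), (uniqueness_limite _ _ _ _ d4 e4),
    (uniqueness_limite _ _ _ _ d5 e5), (uniqueness_limite _ _ _ _ d6 e6),
    (uniqueness_limite _ _ _ _ d7 e7), (uniqueness_limite _ _ _ _ d8 e8).
  exact Heq.
Qed.

Lemma deriv_over_double (g : R -> R) (K s g' : R) :
  derivable_pt_lim g s g' -> 0 < g s ->
  derivable_pt_lim (fun t => K / (2 * g t)) s (- K * g' / (2 * g s ^ 2)).
Proof.
  intros Hg Hpos. eapply derivable_pt_lim_value.
  - apply (derivable_pt_lim_div (fun _ => K) (fun t => 2 * g t)).
    + apply derivable_pt_lim_const.
    + apply derivable_pt_lim_cmul, Hg.
    + lra.
  - unfold Rsqr. field. lra.
Qed.

Lemma deriv_kinetic (K L s : R) :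
  0 < L -> derivable_pt_lim (fun t => (t ^ 2 + K) / (2 * L)) s (s / L).
Proof.
  intros HL. eapply derivable_pt_lim_value.
  - apply (derivable_pt_lim_div (fun t => t ^ 2 + K) (fun _ => 2 * L)).
    + apply (derivable_pt_lim_plus (fun t => t ^ 2) (fun _ => K)).
      * apply derivable_pt_lim_pow.
      * apply derivable_pt_lim_const.
    + apply derivable_pt_lim_const.
    + lra.
  - unfold Rsqr. simpl. field. lra.
Qed.

Lemma homogeneous_sum_deriv (C : R -> nat -> R) (C' : nat -> R) (u v s0 : R) (N : nat) :
  (forall i, derivable_pt_lim (fun s => C s i) s0 (C' i)) ->
  derivable_pt_lim (fun s => sum_f_R0 (fun i => C s i * u ^ (N - i) * v ^ i) N) s0
    (poly_eval (fun i => C' i * u ^ (N - i)) N v).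
Proof.
  intros HC. apply (derivable_pt_lim_sum (fun i s => C s i * u ^ (N - i) * v ^ i)).
  intros i _. eapply derivable_pt_lim_value.
  - apply (derivable_pt_lim_ext (fun s => (u ^ (N - i) * v ^ i) * C s i));
      [intros; ring | apply derivable_pt_lim_cmul, HC].
  - ring.
Qed.

Lemma polyF_coef (n : nat) (a : nat -> R -> R -> R) (x y p1 p2 : R) :
  polyF n a x y p1 p2 = sum_f_R0 (fun i => coef n a x y i * p1 ^ (n - i) * p2 ^ i) n.
Proof. apply sum_eq. intros i Hi. rewrite coef_le by exact Hi. reflexivity. Qed.

Section BracketAtPoint.

Variables (Lam : R -> R -> R) (n : nat) (a : nat -> R -> R -> R).
Variables (x y Lx Ly : R) (Ax Ay : nat -> R).
Hypothesis hpos : 0 < Lam x y.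
Hypothesis dLx : derivable_pt_lim (fun t => Lam t y) x Lx.
Hypothesis dLy : derivable_pt_lim (fun t => Lam x t) y Ly.
Hypothesis dAx : forall i, derivable_pt_lim (fun t => coef n a t y i) x (Ax i).
Hypothesis dAy : forall i, derivable_pt_lim (fun t => coef n a x t i) y (Ay i).

Lemma Ax_out (i : nat) : (n < i)%nat -> Ax i = 0.
Proof.
  intros Hi. apply (deriv_of_const (fun t => coef n a t y i) 0 x); [|exact (dAx i)].
  intros; apply coef_gt; exact Hi.
Qed.

Lemma Ay_out (i : nat) : (n < i)%nat -> Ay i = 0.
Proof.
  intros Hi. apply (deriv_of_const (fun t => coef n a x t i) 0 y); [|exact (dAy i)].
  intros; apply coef_gt; exact Hi.
Qed.

Lemma polyF_dx (t : R) : derivable_pt_lim (fun s => polyF n a s y 1 t) x (poly_eval Ax n t).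
Proof.
  apply (derivable_pt_lim_ext (fun s => sum_f_R0 (fun i => coef n a s y i * 1 ^ (n - i) * t ^ i) n));
    [intros; symmetry; apply polyF_coef|].
  eapply derivable_pt_lim_value; [exact (homogeneous_sum_deriv _ _ 1 t x n dAx)|].
  apply sum_eq. intros; rewrite pow1; ring.
Qed.

Lemma polyF_dy (t : R) : derivable_pt_lim (fun s => polyF n a x s 1 t) y (poly_eval Ay n t).
Proof.
  apply (derivable_pt_lim_ext (fun s => sum_f_R0 (fun i => coef n a x s i * 1 ^ (n - i) * t ^ i) n));
    [intros; symmetry; apply polyF_coef|].
  eapply derivable_pt_lim_value; [exact (homogeneous_sum_deriv _ _ 1 t y n dAy)|].
  apply sum_eq. intros; rewrite pow1; ring.
Qed.

Lemma polyF_dp1 (t : R) :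
  derivable_pt_lim (fun s => polyF n a x y s t) 1 (poly_eval (dp1_coef n (coef n a x y)) n t).
Proof.
  unfold polyF. eapply derivable_pt_lim_value.
  - apply (derivable_pt_lim_sum (fun i s => a i x y * s ^ (n - i) * t ^ i)). intros i _.
    apply (derivable_pt_lim_ext (fun s => (a i x y * t ^ i) * s ^ (n - i)));
      [intros; ring | apply derivable_pt_lim_cmul, derivable_pt_lim_pow].
  - apply sum_eq. intros i Hi. unfold dp1_coef.
    rewrite coef_le, pow1, minus_INR by exact Hi. ring.
Qed.

Lemma polyF_dp2 (t : R) :
  derivable_pt_lim (fun s => polyF n a x y 1 s) t (poly_eval (poly_deriv (coef n a x y)) n t).
Proof.
  apply (derivable_pt_lim_ext (poly_eval (coef n a x y) (S n))); [|apply poly_eval_deriv].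
  intros s. rewrite polyF_coef, (poly_eval_tail _ n) by (try lia; intros; apply coef_gt; lia).
  apply sum_eq. intros; rewrite pow1; ring.
Qed.

Lemma poly_eval_bracket_coef (t : R) :
  poly_eval (bracket_coef n (Lam x y) Lx Ly (coef n a x y) Ax Ay) (S (S n)) t =
  Lam x y * poly_eval Ax n t + Lam x y * t * poly_eval Ay n t
  + / 2 * Lx * (1 + t ^ 2) * poly_eval (dp1_coef n (coef n a x y)) n t
  + / 2 * Ly * (1 + t ^ 2) * poly_eval (poly_deriv (coef n a x y)) n t.
Proof.
  set (c := coef n a x y).
  assert (Hc : forall i, (n < i)%nat -> c i = 0) by (intros; apply coef_gt; auto).
  unfold bracket_coef. rewrite !poly_eval_plus, !poly_eval_scal, !poly_eval_plus.
  rewrite (poly_eval_shift 1 Ay (S n)), (poly_eval_shift 2 (dp1_coef n c) n),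
    (poly_eval_shift 2 (poly_deriv c) n).
  rewrite (poly_eval_tail Ax n), (poly_eval_tail Ay n), (poly_eval_tail (dp1_coef n c) n),
    (poly_eval_tail (poly_deriv c) n (S (S n)))
    by (try lia; intros; unfold dp1_coef, poly_deriv;
        first [apply Ax_out | apply Ay_out | rewrite Hc by lia; ring]; lia).
  ring.
Qed.

(* Evaluating {H,F} = 0 on p = (1,t): all bracket coefficients vanish. *)
Lemma bracket_coef_zero :
  poisson_zero (hamiltonian Lam) (polyF n a) ->
  forall m, bracket_coef n (Lam x y) Lx Ly (coef n a x y) Ax Ay m = 0.
Proof.
  intros hPB.
  assert (Hpoly : forall t,
    poly_eval (bracket_coef n (Lam x y) Lx Ly (coef n a x y) Ax Ay) (S (S n)) t = 0).
  { intros t.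
    assert (Hp2 : derivable_pt_lim (fun s => hamiltonian Lam x y 1 s) t (t / Lam x y)).
    { apply (derivable_pt_lim_ext (fun s => (s ^ 2 + 1 ^ 2) / (2 * Lam x y)));
        [intros; unfold hamiltonian; rewrite Rplus_comm; reflexivity|].
      exact (deriv_kinetic _ _ t hpos). }
    pose proof (poisson_zero_at _ _ x y 1 t _ _ _ _ _ _ _ _ hPB
      (deriv_over_double (fun s => Lam s y) (1 ^ 2 + t ^ 2) x Lx dLx hpos)
      (deriv_over_double (fun s => Lam x s) (1 ^ 2 + t ^ 2) y Ly dLy hpos)
      (deriv_kinetic (t ^ 2) (Lam x y) 1 hpos) Hp2
      (polyF_dx t) (polyF_dy t) (polyF_dp1 t) (polyF_dp2 t)) as H0.
    rewrite poly_eval_bracket_coef.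
    transitivity (- Lam x y ^ 2 * 0); [rewrite <- H0; field; lra | ring]. }
  intros m. destruct (Nat.le_gt_cases m (S (S n))) as [Hm|Hm].
  - exact (poly_eval_coef_zero _ _ Hpoly m Hm).
  - destruct m as [|[|m]]; [lia | lia|].
    unfold bracket_coef, dp1_coef, poly_deriv. cbn [shift].
    rewrite !coef_gt, Ax_out, Ay_out by lia. ring.
Qed.

Lemma moment_identities_at :
  (1 <= n)%nat -> poisson_zero (hamiltonian Lam) (polyF n a) ->
  let c := coef n a x y in
  Lam x y * even_moment n Ax + Lx * even_moment n c
    - (Lam x y * odd_moment n Ay + Ly * odd_moment n c)
    + Lam x y * even_part n Ax + INR n * Ly * odd_part n c = 0 /\
  Lam x y * odd_moment n Ax + Lx * odd_moment n c
    + (Lam x y * even_moment n Ay + Ly * even_moment n c)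
    + Lam x y * odd_part n Ax - INR n * Ly * even_part n c = 0.
Proof.
  intros Hn hPB c. apply moment_identities.
  - exact Hn.
  - intros; apply coef_gt; assumption.
  - exact Ay_out.
  - exact (bracket_coef_zero hPB).
Qed.

End BracketAtPoint.

Lemma alt_sum_coef (w : nat -> R) (s : nat -> nat) (n M : nat) (a : nat -> R -> R -> R)
  (x y : R) :
  (M <= n)%nat -> (forall j, (j <= M)%nat -> (s j <= n)%nat) ->
  (forall j, (M < j <= n)%nat -> w j = 0 \/ (n < s j)%nat) ->
  sum_f_R0 (fun j => (-1) ^ j * w j * a (s j) x y) M = alt_sum w s n (coef n a x y).
Proof.
  intros HM Hin Hout. apply sum_extend; [exact HM | |].
  - intros j Hj. rewrite coef_le by (apply Hin; exact Hj). reflexivity.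
  - intros j Hj. destruct (Hout j Hj) as [-> | Hs]; [ring | rewrite coef_gt by exact Hs; ring].
Qed.

Lemma part_of_relation (s : nat -> nat) (n M : nat) (a : nat -> R -> R -> R) (x y c : R) :
  (S M <= n)%nat -> (forall j, (j <= S M)%nat -> (s j <= n)%nat) ->
  (forall j, (S M < j)%nat -> (n < s j)%nat) ->
  a (s (S M)) x y = c + sum_f_R0 (fun j => (-1) ^ j * a (s (M - j)%nat) x y) M ->
  alt_sum (fun _ => 1) s n (coef n a x y) = (-1) ^ S M * c.
Proof.
  intros HM Hin Hout Hrel.
  rewrite <- (alt_sum_coef _ _ n (S M)) by (auto; intros; right; apply Hout; lia).
  rewrite (sum_eq _ (fun j => (-1) ^ j * a (s j) x y)) by (intros; ring).
  exact (alt_sum_closure (fun j => a (s j) x y) M c Hrel).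
Qed.

(* For n = 2k the Kolokoltsov relations say F(1,i) = c2 i^n. *)
Lemma kolokoltsov_even (n k : nat) (a : nat -> R -> R -> R) (c2 : R) :
  n = (2 * k)%nat -> (2 <= k)%nat -> kolokoltsov n a c2 ->
  (forall x y, even_part n (coef n a x y) = (-1) ^ k * c2) /\
  (forall x y, odd_part n (coef n a x y) = 0).
Proof.
  intros Hn Hk hK. split; intros x y; destruct (hK x y) as [K1 K2].
  - replace k with (S (k - 1)) by lia.
    apply (part_of_relation (fun l => 2 * l)%nat); try (intros; lia).
    replace (2 * S (k - 1))%nat with n by lia. rewrite K2. f_equal.
    replace (Nat.div2 (n - 2)) with (k - 1)%nat
      by (replace (n - 2)%nat with (2 * (k - 1))%nat by lia; now rewrite Nat.div2_double).
    apply sum_eq. intros j Hj. do 2 f_equal. lia.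
  - replace 0 with ((-1) ^ S (k - 2) * 0) by ring.
    apply (part_of_relation (fun l => S (2 * l))); try (intros; lia).
    replace (S (2 * S (k - 2))) with (n - 1)%nat by lia. rewrite K1, Rplus_0_l.
    replace (Nat.div2 (n - 3)) with (k - 2)%nat
      by (replace (n - 3)%nat with (S (2 * (k - 2))) by lia; now rewrite Nat.div2_succ_double).
    apply sum_eq. intros j Hj. do 2 f_equal. lia.
Qed.

(* For n = 2k+1 the Kolokoltsov relations say F(1,i) = c2 i^n. *)
Lemma kolokoltsov_odd (n k : nat) (a : nat -> R -> R -> R) (c2 : R) :
  n = (2 * k + 1)%nat -> (1 <= k)%nat -> kolokoltsov n a c2 ->
  (forall x y, even_part n (coef n a x y) = 0) /\
  (forall x y, odd_part n (coef n a x y) = (-1) ^ k * c2).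
Proof.
  intros Hn Hk hK. split; intros x y; destruct (hK x y) as [K1 K2].
  - replace 0 with ((-1) ^ S (k - 1) * 0) by ring.
    apply (part_of_relation (fun l => 2 * l)%nat); try (intros; lia).
    replace (2 * S (k - 1))%nat with (n - 1)%nat by lia. rewrite K1, Rplus_0_l.
    replace (Nat.div2 (n - 3)) with (k - 1)%nat
      by (replace (n - 3)%nat with (2 * (k - 1))%nat by lia; now rewrite Nat.div2_double).
    apply sum_eq. intros j Hj. do 2 f_equal. lia.
  - replace k with (S (k - 1)) by lia.
    apply (part_of_relation (fun l => S (2 * l))); try (intros; lia).
    replace (S (2 * S (k - 1))) with n by lia. rewrite K2. f_equal.
    replace (Nat.div2 (n - 2)) with (k - 1)%nat
      by (replace (n - 2)%nat with (S (2 * (k - 1))) by lia; now rewrite Nat.div2_succ_double).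
    apply sum_eq. intros j Hj. do 2 f_equal. lia.
Qed.

Definition conserved (P Q : R -> R -> R) : Prop :=
  forall x y, exists Px Qy,
    derivable_pt_lim (fun t => P t y) x Px /\
    derivable_pt_lim (fun t => Q x t) y Qy /\ Px + Qy = 0.

Lemma div_free_of_conserved (P Q R0 : R -> R -> R) :
  conserved P Q -> conserved Q R0 -> div_free P Q R0.
Proof. intros HPQ HQR x y. split; [apply HPQ | apply HQR]. Qed.

Lemma conserved_ext (P' Q' P Q : R -> R -> R) : conserved P' Q' ->
  (forall x y, P x y = P' x y) -> (forall x y, Q x y = Q' x y) -> conserved P Q.
Proof.
  intros H HP HQ x y. destruct (H x y) as (Px & Qy & HPx & HQy & Hsum).
  exists Px, Qy. split; [|split; [|exact Hsum]].
  - apply (derivable_pt_lim_ext (fun t => P' t y)); [intros; symmetry; apply HP | exact HPx].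
  - apply (derivable_pt_lim_ext (fun t => Q' x t)); [intros; symmetry; apply HQ | exact HQy].
Qed.

Lemma conserved_opp (P Q : R -> R -> R) :
  conserved P Q -> conserved (fun x y => - P x y) (fun x y => - Q x y).
Proof.
  intros H x y. destruct (H x y) as (Px & Qy & HPx & HQy & Hsum).
  exists (- Px), (- Qy). split; [|split; [|lra]].
  - exact (derivable_pt_lim_opp (fun t => P t y) x Px HPx).
  - exact (derivable_pt_lim_opp (fun t => Q x t) y Qy HQy).
Qed.

Lemma moment_conservation_law (Lam : R -> R -> R) (n : nat) (a : nat -> R -> R -> R)
  (s0 s1 : R) :
  (1 <= n)%nat -> has_partials Lam -> (forall i, (i <= n)%nat -> has_partials (a i)) ->
  (forall x y, 0 < Lam x y) -> poisson_zero (hamiltonian Lam) (polyF n a) ->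
  (forall x y, even_part n (coef n a x y) = s0) ->
  (forall x y, odd_part n (coef n a x y) = s1) ->
  conserved (fun x y => even_moment n (coef n a x y) * Lam x y)
            (fun x y => (INR n * s1 - odd_moment n (coef n a x y)) * Lam x y) /\
  conserved (fun x y => odd_moment n (coef n a x y) * Lam x y)
            (fun x y => (even_moment n (coef n a x y) - INR n * s0) * Lam x y).
Proof.
  intros Hn HLam Ha Hpos hPB Hs0 Hs1.
  assert (S_const : forall x y Ax,
            (forall i, derivable_pt_lim (fun t => coef n a t y i) x (Ax i)) ->
            even_part n Ax = 0 /\ odd_part n Ax = 0).
  { intros x y Ax dAx. split.
    - apply (deriv_of_const (fun t => even_part n (coef n a t y)) s0 x);
        [intros; apply Hs0 | apply alt_sum_deriv, dAx].
    - apply (deriv_of_const (fun t => odd_part n (coef n a t y)) s1 x);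
        [intros; apply Hs1 | apply alt_sum_deriv, dAx]. }
  split; intros x y;
    destruct (proj1 (HLam x y)) as [Lx dLx]; destruct (proj2 (HLam x y)) as [Ly dLy];
    destruct (coef_partials n a Ha x y) as (Ax & Ay & dAx & dAy);
    destruct (moment_identities_at Lam n a x y Lx Ly Ax Ay (Hpos x y) dLx dLy dAx dAy Hn hPB)
      as [HR HI];
    destruct (S_const x y Ax dAx) as [S0x S1x];
    eexists; eexists; (split; [apply derivable_pt_lim_prod; [apply alt_sum_deriv, dAx | exact dLx]|]).
  - split.
    + apply derivable_pt_lim_prod; [|exact dLy].
      apply (derivable_pt_lim_minus (fun _ => INR n * s1) (fun t => odd_moment n (coef n a x t)));
        [apply derivable_pt_lim_const | apply alt_sum_deriv, dAy].
    + rewrite Hs1, S0x in HR. unfold even_moment, odd_moment, even_part, odd_part in *. lra.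
  - split.
    + apply derivable_pt_lim_prod; [|exact dLy].
      apply (derivable_pt_lim_minus (fun t => even_moment n (coef n a x t)) (fun _ => INR n * s0));
        [apply alt_sum_deriv, dAy | apply derivable_pt_lim_const].
    + rewrite Hs0, S1x in HI. unfold even_moment, odd_moment, even_part, odd_part in *. lra.
Qed.

Lemma Se_moment (n k : nat) (a : nat -> R -> R -> R) (x y : R) :
  n = (2 * k)%nat -> (1 <= k)%nat -> Se n k a x y = even_moment n (coef n a x y).
Proof.
  intros Hn Hk. apply alt_sum_coef; try (intros; lia).
  intros j Hj. destruct (Nat.eq_dec j k) as [->|]; [left | right; lia].
  rewrite Hn, mult_INR. simpl INR. ring.
Qed.

Lemma So_moment (n k : nat) (a : nat -> R -> R -> R) (x y : R) :
  n = (2 * k)%nat -> (2 <= k)%nat ->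
  So n k a x y = odd_moment n (coef n a x y) - odd_part n (coef n a x y).
Proof.
  intros Hn Hk. unfold So.
  rewrite (sum_eq _ (fun j => (-1) ^ j * (INR n - 2 - 2 * INR j) * a (S (2 * j)) x y))
    by (intros; rewrite Nat.add_1_r; reflexivity).
  rewrite (alt_sum_coef _ _ n (k - 2)); try (intros; lia).
  - unfold odd_moment, odd_part.
    rewrite (alt_sum_lin _ (fun l => INR n - 1 - 2 * INR l) (fun _ => 1) 1 (-1)) by (intros; ring).
    ring.
  - intros j Hj. destruct (Nat.eq_dec j (k - 1)) as [->|]; [left | right; lia].
    rewrite Hn, minus_INR, mult_INR by lia. simpl INR. ring.
Qed.

Lemma Te_moment (n k : nat) (a : nat -> R -> R -> R) (x y : R) :
  n = (2 * k + 1)%nat ->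
  Te n k a x y = even_moment n (coef n a x y) - even_part n (coef n a x y).
Proof.
  intros Hn. unfold Te. rewrite (alt_sum_coef _ (fun l => 2 * l)%nat n (k - 1)); try (intros; lia).
  - unfold even_moment, even_part.
    rewrite (alt_sum_lin _ (fun l => INR n - 2 * INR l) (fun _ => 1) 1 (-1)) by (intros; ring).
    ring.
  - intros j Hj. destruct (Nat.eq_dec j k) as [->|]; [left | right; lia].
    rewrite Hn, plus_INR, mult_INR. simpl INR. ring.
Qed.

Lemma To_moment (n k : nat) (a : nat -> R -> R -> R) (x y : R) :
  n = (2 * k + 1)%nat -> To n k a x y = odd_moment n (coef n a x y).
Proof.
  intros Hn. unfold To.
  rewrite (sum_eq _ (fun j => (-1) ^ j * (INR n - 1 - 2 * INR j) * a (S (2 * j)) x y))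
    by (intros; rewrite Nat.add_1_r; reflexivity).
  apply alt_sum_coef; try (intros; lia).
  intros j Hj. destruct (Nat.eq_dec j k) as [->|]; [left | right; lia].
  rewrite Hn, plus_INR, mult_INR. simpl INR. ring.
Qed.

(* Even case: P, Q, R are Lambda W0, -Lambda W1 and Lambda (n (-1)^k c2 - W0),
   the two laws being the real and (negated) imaginary parts of the complex law.
   Odd case: P, Q, R are Lambda W1, Lambda W0 and Lambda (n (-1)^k c2 - W1). *)
Theorem theorem2
  (e1x e1y e2x e2y : R) (Lam : R -> R -> R) (n : nat)
  (a : nat -> R -> R -> R) (c2 : R)
  (hGamma : is_lattice_basis e1x e1y e2x e2y)
  (hLam_smooth : smooth2 Lam) (hLam_per : periodic e1x e1y e2x e2y Lam)
  (hLam_pos : forall x y, 0 < Lam x y)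
  (hn : (3 <= n)%nat)
  (ha_smooth : forall i, (i <= n)%nat -> smooth2 (a i))
  (ha_per : forall i, (i <= n)%nat -> periodic e1x e1y e2x e2y (a i))
  (hPB : poisson_zero (hamiltonian Lam) (polyF n a))
  (hK : kolokoltsov n a c2) :
  (forall k : nat, n = (2 * k)%nat ->
     div_free (fun x y => Se n k a x y * Lam x y)
              (fun x y => - So n k a x y * Lam x y)
              (fun x y => (- Se n k a x y + (-1) ^ k * INR n * c2) * Lam x y)) /\
  (forall k : nat, n = (2 * k + 1)%nat ->
     div_free (fun x y => To n k a x y * Lam x y)
              (fun x y => Te n k a x y * Lam x y)
              (fun x y => (- To n k a x y + (-1) ^ k * INR n * c2) * Lam x y)).
Proof.
  pose proof (smooth2_has_partials Lam hLam_smooth) as hLam.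
  assert (ha : forall i, (i <= n)%nat -> has_partials (a i))
    by (intros; apply smooth2_has_partials, ha_smooth; assumption).
  split; intros k Hk.
  - destruct (kolokoltsov_even n k a c2 Hk ltac:(lia) hK) as [Hs0 Hs1].
    destruct (moment_conservation_law Lam n a _ _ ltac:(lia) hLam ha hLam_pos hPB Hs0 Hs1)
      as [HR HI].
    apply div_free_of_conserved.
    + apply (conserved_ext _ _ _ _ HR); intros x y.
      * rewrite Se_moment by lia. reflexivity.
      * rewrite So_moment, Hs1 by lia. ring.
    + apply (conserved_ext _ _ _ _ (conserved_opp _ _ HI)); intros x y.
      * rewrite So_moment, Hs1 by lia. ring.
      * rewrite Se_moment by lia. ring.
  - destruct (kolokoltsov_odd n k a c2 Hk ltac:(lia) hK) as [Hs0 Hs1].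
    destruct (moment_conservation_law Lam n a _ _ ltac:(lia) hLam ha hLam_pos hPB Hs0 Hs1)
      as [HR HI].
    apply div_free_of_conserved.
    + apply (conserved_ext _ _ _ _ HI); intros x y.
      * rewrite To_moment by lia. reflexivity.
      * rewrite Te_moment, Hs0 by lia. ring.
    + apply (conserved_ext _ _ _ _ HR); intros x y.
      * rewrite Te_moment, Hs0 by lia. ring.
      * rewrite To_moment by lia. ring.
Qed.
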